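(* Let $M\in\mathbb{R}^{2n\times 2n}$ be symmetric positive definite, let $1\le k\le n$, and let $J_{2m}=\left[\begin{smallmatrix}0&I_m\\-I_m&0\end{smallmatrix}\right]$. Let $\tilde N=\operatorname{diag}(N,N)$ with $N=\operatorname{diag}(\nu_1,\ldots,\nu_k)$, $0<\nu_1<\nu_2<\cdots<\nu_k$. Consider the problem $$\min_{X\in\mathbb{R}^{2n\times 2k}} f(X):=\operatorname{tr}(\tilde N X^TMX)\quad\text{s.t.}\quad X^TJ_{2n}X=J_{2k}.$$ A matrix $X\in\mathbb{R}^{2n\times 2k}$ is a critical point of this problem (i.e. $X^TJ_{2n}X=J_{2k}$ and there is a skew-symmetric $L\in\mathbb{R}^{2k\times 2k}$ with $MX\tilde N=J_{2n}XL$) if and only if its columns form a symplectic eigenvector set of $M$, i.e. $X^TJ_{2n}X=J_{2k}$ and $$MX=J_{2n}X\begin{bmatrix}0&-\Delta\\ \Delta&0\end{bmatrix}$$ for some diagonal matrix $\Delta=\operatorname{diag}(d_{i_1},\ldots,d_{i_k})$ whose entries are symplectic eigenvalues of $M$ (indices $i_1,\ldots,i_k$ from $\{1,\ldots,n\}$).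
   Context: Symplectic eigenvalues are in the sense of Williamson's theorem: there is a symplectic $S$ ($S^TJ_{2n}S=J_{2n}$) with $S^TMS=\operatorname{diag}(D,D)$, $D=\operatorname{diag}(d_1,\ldots,d_n)$, $d_j>0$; the column pairs $[s_j,s_{n+j}]$ are symplectic eigenvectors associated with $d_j$. In the critical case one has $X^TMX=\operatorname{diag}(\Delta,\Delta)$ and Lagrange multiplier $L=\left[\begin{smallmatrix}0&-\Delta N\\ \Delta N&0\end{smallmatrix}\right]$. *)

From HB Require Import structures.
From mathcomp Require Import all_boot all_order all_algebra.
From mathcomp Require Import reals.
Set Implicit Arguments. Unset Strict Implicit. Unset Printing Implicit Defensive.
Import Order.TTheory GRing.Theory Num.Theory.
Local Open Scope ring_scope.

Definition Jmx (R : realType) (m : nat) : 'M[R]_(m + m) :=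
  block_mx 0 1%:M (- 1%:M) 0.

Definition spd (R : realType) (p : nat) (M : 'M[R]_p) : Prop :=
  M^T = M /\ forall x : 'cV[R]_p, x != 0 -> 0 < (x^T *m M *m x) 0 0.

Definition symplectic (R : realType) (n : nat) (S : 'M[R]_(n + n)) : Prop :=
  S^T *m Jmx R n *m S = Jmx R n.

Definition williamson (R : realType) (n : nat) (M : 'M[R]_(n + n))
    (S : 'M[R]_(n + n)) (d : 'rV[R]_n) : Prop :=
  symplectic S /\ (forall j, 0 < d 0 j) /\
  S^T *m M *m S = block_mx (diag_mx d) 0 0 (diag_mx d).

Definition critical_point (R : realType) (n k : nat) (M : 'M[R]_(n + n))
    (nu : 'rV[R]_k) (X : 'M[R]_(n + n, k + k)) : Prop :=
  X^T *m Jmx R n *m X = Jmx R k /\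
  exists L : 'M[R]_(k + k), L^T = - L /\
    M *m X *m block_mx (diag_mx nu) 0 0 (diag_mx nu) = Jmx R n *m X *m L.

Definition sympl_eigvec_set (R : realType) (n k : nat) (M : 'M[R]_(n + n))
    (X : 'M[R]_(n + n, k + k)) : Prop :=
  X^T *m Jmx R n *m X = Jmx R k /\
  exists delta : 'rV[R]_k,
    (exists (S : 'M[R]_(n + n)) (d : 'rV[R]_n), williamson M S d /\
       exists idx : 'I_k -> 'I_n, forall j, delta 0 j = d 0 (idx j)) /\
    M *m X = Jmx R n *m X *m block_mx 0 (- diag_mx delta) (diag_mx delta) 0.

(* Multiplying the Lagrange equation M X Ñ = J X L by X^T gives
   L = J^T G Ñ with G = X^T M X, and skew-symmetry of L reads Ñ G J = J G Ñ.  Since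
   the ν_i are positive and distinct, this forces G = diag(Δ, Δ), hence
   M X = J X [0 -Δ; Δ 0].  Writing X = S Y for a Williamson basis S turns this into
   diag(D, D) Y = J Y [0 -Δ; Δ 0], so a nonzero entry in row r of the i-th column
   of Y forces d_r = Δ_i.  Conversely, L = [0 -Δ; Δ 0] Ñ is a skew multiplier.

   Williamson's theorem is proved by adding one symplectic eigenpair at a time.  On
   the symplectic complement W of the pairs found so far (the range of a projection
   P), λ = inf (x^T M x + y^T M y) / (2 x^T J y) is attained: the symmetric pencil
   B = [Q, -λ P^T J P; -λ P^T J^T P, Q] is positive semidefinite, and it is singular
   because otherwise it would be coercive, contradicting the definition of λ.  A
   kernel vector of B gives x, y in W with M x = λ J y and M y = -λ J x. *)

From HB Require Import structures.
From mathcomp Require Import all_boot all_order all_algebra.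
From mathcomp Require Import classical_sets reals.
From mathcomp Require Import ring lra zify.
Import Order.TTheory GRing.Theory Num.Theory.
Local Open Scope ring_scope.
Set Implicit Arguments. Unset Strict Implicit. Unset Printing Implicit Defensive.

Definition bform (R : pzRingType) N (A : 'M[R]_N) (x y : 'cV[R]_N) : R :=
  (x^T *m A *m y) 0 0.

Definition sqnorm (R : pzRingType) N (x : 'cV[R]_N) : R := bform 1%:M x x.

Lemma form_row_mx (R : pzRingType) N p1 p2 q1 q2 (A : 'M[R]_N)
    (X1 : 'M[R]_(N, p1)) (X2 : 'M[R]_(N, p2)) (Y1 : 'M[R]_(N, q1)) (Y2 : 'M[R]_(N, q2)) :
  (row_mx X1 X2)^T *m A *m row_mx Y1 Y2 =
  block_mx (X1^T *m A *m Y1) (X1^T *m A *m Y2) (X2^T *m A *m Y1) (X2^T *m A *m Y2).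
Proof. by rewrite tr_row_mx mul_col_mx mul_col_row. Qed.

Lemma mulmx_neq0 (R : pzRingType) m N (A : 'M[R]_(m, N)) :
  A != 0 -> exists z : 'cV[R]_N, A *m z != 0.
Proof.
move=> A_neq0; have [i Ai|A0] := pickP (fun i => col i A != 0).
  by exists (delta_mx i 0); rewrite -colE.
case/eqP: A_neq0; apply/matrixP => r c.
by have /negbFE/eqP/colP/(_ r) := A0 c; rewrite !mxE.
Qed.

Section BilinearForm.
Variables (R : comNzRingType) (N : nat).
Implicit Types (A B C D : 'M[R]_N) (x y z : 'cV[R]_N).

Lemma bform_tr A x y : bform A x y = bform A^T y x.
Proof.
rewrite /bform.
have -> : y^T *m A^T *m x = (x^T *m A *m y)^T by rewrite !trmx_mul trmxK mulmxA.
by rewrite [RHS]mxE.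
Qed.

Lemma bformDr A x y z : bform A x (y + z) = bform A x y + bform A x z.
Proof. by rewrite /bform mulmxDr mxE. Qed.

Lemma bformZr A a x y : bform A x (a *: y) = a * bform A x y.
Proof. by rewrite /bform -scalemxAr mxE. Qed.

Lemma bformNr A x y : bform A x (- y) = - bform A x y.
Proof. by rewrite /bform mulmxN mxE. Qed.

Lemma bformBr A x y z : bform A x (y - z) = bform A x y - bform A x z.
Proof. by rewrite bformDr bformNr. Qed.

Lemma bform0r A x : bform A x 0 = 0.
Proof. by rewrite /bform mulmx0 mxE. Qed.

Lemma bformZl A a x y : bform A (a *: x) y = a * bform A x y.
Proof. by rewrite bform_tr bformZr -bform_tr. Qed.

Lemma bformBl A x y z : bform A (x - y) z = bform A x z - bform A y z.
Proof. by rewrite bform_tr bformBr -!(bform_tr A). Qed.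

Lemma bform0l A x : bform A 0 x = 0.
Proof. by rewrite bform_tr bform0r. Qed.

Lemma bformDm A B x y : bform (A + B) x y = bform A x y + bform B x y.
Proof. by rewrite /bform mulmxDr mulmxDl mxE. Qed.

Lemma bformZm a A x y : bform (a *: A) x y = a * bform A x y.
Proof. by rewrite /bform -scalemxAr -scalemxAl mxE. Qed.

Lemma bform_mulmxr A B x y : bform A x (B *m y) = bform (A *m B) x y.
Proof. by rewrite /bform !mulmxA. Qed.

Lemma bform_conj A B x y : bform (A^T *m B *m A) x y = bform B (A *m x) (A *m y).
Proof. by rewrite /bform trmx_mul !mulmxA. Qed.

Lemma bform_mulmxl A x y : bform A x y = bform 1%:M x (A *m y).
Proof. by rewrite bform_mulmxr mul1mx. Qed.

Lemma mulmx_bform m p (X : 'M[R]_(N, m)) A (Y : 'M[R]_(N, p)) i l :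
  (X^T *m A *m Y) i l = bform A (col i X) (col l Y).
Proof.
rewrite /bform !mxE; apply: eq_bigr => r _; rewrite !mxE; congr (_ * _).
by apply: eq_bigr => s _; rewrite !mxE.
Qed.

Lemma bform_block A B C D x y (x' y' : 'cV[R]_N) :
  bform (block_mx A B C D) (col_mx x y) (col_mx x' y') =
  bform A x x' + bform B x y' + bform C y x' + bform D y y'.
Proof.
rewrite /bform tr_col_mx mul_row_block !mul_row_col !mulmxDl !(mxE, addrA).
by rewrite -!addrA; congr (_ + _); rewrite addrCA.
Qed.

End BilinearForm.

Section SquaredNorm.
Variables (R : realFieldType) (N : nat).
Implicit Types (x y z : 'cV[R]_N).

Lemma sqnormE x : sqnorm x = \sum_i x i 0 ^+ 2.
Proof. rewrite /sqnorm /bform mulmx1 mxE; apply: eq_bigr => i _; by rewrite !mxE expr2. Qed.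

Lemma sqnorm_ge0 x : 0 <= sqnorm x.
Proof. by rewrite sqnormE sumr_ge0 // => i _; rewrite sqr_ge0. Qed.

Lemma sqnorm_eq0 x : (sqnorm x == 0) = (x == 0).
Proof.
apply/idP/idP => [|/eqP ->]; last by rewrite /sqnorm bform0l.
rewrite sqnormE psumr_eq0 => [/allP x0|i _]; last exact: sqr_ge0.
apply/eqP/matrixP => i j; rewrite (ord1 j) mxE.
by apply/eqP; rewrite -sqrf_eq0; apply: (implyP (x0 i _)); rewrite ?mem_index_enum.
Qed.

Lemma sqnorm_gt0 x : (0 < sqnorm x) = (x != 0).
Proof. by rewrite lt_def sqnorm_ge0 sqnorm_eq0 andbT. Qed.

Lemma sqr_entry_le_sqnorm x i : x i 0 ^+ 2 <= sqnorm x.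
Proof. by rewrite sqnormE (bigD1 i) //= lerDl sumr_ge0 // => k _; exact: sqr_ge0. Qed.

Lemma bform_le_sqnorm (A : 'M[R]_N) z :
  bform A z z <= (\sum_i \sum_k `|A k i|) * sqnorm z.
Proof.
rewrite /bform mxE mulr_suml; apply: ler_sum => k _; rewrite mxE mulr_suml mulr_suml.
apply: ler_sum => i _; rewrite !mxE.
have zi := sqr_entry_le_sqnorm z i; have zk := sqr_entry_le_sqnorm z k.
have zizk : `|z i 0| * `|z k 0| <= sqnorm z.
  rewrite -(real_normK (num_real (z i 0))) in zi.
  rewrite -(real_normK (num_real (z k 0))) in zk.
  have := normr_ge0 (z i 0); have := normr_ge0 (z k 0); nra.
apply: le_trans (ler_norm _) _.
by rewrite !normrM mulrAC mulrC ler_wpM2l.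
Qed.

(* Testing positivity of [B] at [z - t B^-1 z] with [t] the inverse of a bound on the
   form of [B^-1] yields the coercivity constant [t]. *)
Lemma psd_unitmx_coercive (B : 'M[R]_N) :
  B^T = B -> (forall z, 0 <= bform B z z) -> B \in unitmx ->
  exists2 c, 0 < c & forall z, c * sqnorm z <= bform B z z.
Proof.
move=> Bsym Bpsd Bunit.
set K := 1 + \sum_i \sum_k `|invmx B k i|.
have K_gt0 : 0 < K by rewrite ltr_pwDl // sumr_ge0 // => i _; rewrite sumr_ge0.
exists K^-1; first by rewrite invr_gt0.
move=> z; set y := invmx B *m z; set t := K^-1.
have By : B *m y = z by rewrite mulKVmx.
have Bzy : bform B z y = sqnorm z by rewrite bform_mulmxl By.
have Byz : bform B y z = sqnorm z by rewrite bform_tr Bsym Bzy.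
have Byy : bform B y y <= K * sqnorm z.
  rewrite bform_mulmxl By bform_tr trmx1 -bform_mulmxl.
  apply: le_trans (bform_le_sqnorm _ z) _.
  by rewrite ler_wpM2r ?sqnorm_ge0 // lerDr.
have tK : t * K = 1 by rewrite mulVf // gt_eqF.
have t_gt0 : 0 < t by rewrite invr_gt0.
have ttByy : t * t * bform B y y <= t * sqnorm z.
  have -> : t * sqnorm z = t * t * (K * sqnorm z) by rewrite -mulrA (mulrA t K) tK mul1r.
  by rewrite ler_wpM2l // mulr_ge0 // ltW.
have := Bpsd (z - t *: y).
rewrite !bformBl !bformBr !bformZl !bformZr Bzy Byz; lra.
Qed.

Lemma sqnorm_col_mx x y :
  sqnorm (col_mx x y) = sqnorm x + sqnorm y.
Proof.
rewrite /sqnorm (scalar_mx_block N N) bform_block.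
by rewrite /bform !mulmx0 !mul0mx !mxE !addr0.
Qed.

End SquaredNorm.

Section StandardSymplectic.
Variables (R : realType) (n : nat).
Local Notation J := (Jmx R n).
Implicit Types (x y : 'cV[R]_(n + n)).

Lemma trmx_J : J^T = - J.
Proof.
by rewrite /Jmx tr_block_mx !trmx0 trmx1 linearN /= trmx1 opp_block_mx !oppr0 opprK.
Qed.

Lemma mulJJ : J *m J = - 1%:M.
Proof.
rewrite /Jmx mulmx_block !mulmx0 !mul0mx !mulmx1 !mul1mx !addr0 !add0r.
by rewrite [X in _ = - X](scalar_mx_block n n) opp_block_mx oppr0.
Qed.

Lemma trJ_mulJ : J^T *m J = 1%:M.
Proof. by rewrite trmx_J mulNmx mulJJ opprK. Qed.

Lemma mulJ_trJ : J *m J^T = 1%:M.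
Proof. by rewrite trmx_J mulmxN mulJJ opprK. Qed.

Lemma bformJC x y : bform J x y = - bform J y x.
Proof. by rewrite bform_tr trmx_J /bform mulmxN mulNmx mxE. Qed.

Lemma bformJxx x : bform J x x = 0.
Proof. by have := bformJC x x; lra. Qed.

Lemma bformJ_le_sqnorm x y : 2 * bform J x y <= sqnorm x + sqnorm y.
Proof.
have := sqnorm_ge0 (x - J *m y).
rewrite /sqnorm bformBl !bformBr -bform_conj mulmx1 trJ_mulJ.
rewrite [bform _ (_ *m y) x]bform_tr trmx1 bform_mulmxr mul1mx; lra.
Qed.

Lemma trmx_sympl_form p q (X : 'M[R]_(n + n, p)) (Y : 'M[R]_(n + n, q)) :
  (X^T *m J *m Y)^T = - (Y^T *m J *m X).
Proof. by rewrite !trmx_mul trmxK trmx_J mulNmx mulmxN mulmxA. Qed.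

Lemma sympl_form_eq0C p q (X : 'M[R]_(n + n, p)) (Y : 'M[R]_(n + n, q)) :
  Y^T *m J *m X = 0 -> X^T *m J *m Y = 0.
Proof. by move=> YJX; rewrite -[LHS]trmxK trmx_sympl_form YJX oppr0 trmx0. Qed.

Lemma sympl_form_xx x : x^T *m J *m x = 0.
Proof. by rewrite [LHS]mx11_scalar -/(bform J x x) bformJxx raddf0. Qed.

End StandardSymplectic.

Lemma spd_bform_ge0 (R : realType) N (M : 'M[R]_N) x : spd M -> 0 <= bform M x x.
Proof.
move=> [_ M_pd]; have [->|x_neq0] := eqVneq x 0; first by rewrite bform0l.
exact/ltW/M_pd.
Qed.

Section SymplecticPair.
Variables (R : realType) (n : nat) (M P : 'M[R]_(n + n)).
Local Notation J := (Jmx R n).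
Implicit Types (x y z : 'cV[R]_(n + n)).
Hypotheses (M_spd : spd M) (P_idem : P *m P = P) (P_M : P^T *m M *m P = M *m P)
  (P_J : P^T *m J *m P = J *m P) (P_neq0 : P != 0).

Lemma trmx_P_J : P^T *m J *m P = P^T *m J.
Proof.
have := congr1 trmx P_J; rewrite !trmx_mul trmxK trmx_J mulNmx !mulmxN mulmxA.
exact: oppr_inj.
Qed.

Lemma bformJ_mulPr x w : P *m x = x -> bform J x (P *m w) = bform J x w.
Proof.
move=> Px; rewrite -Px /bform trmx_mul !mulmxA -(mulmxA _ P^T) -(mulmxA _ (P^T *m J)).
by rewrite trmx_P_J !mulmxA.
Qed.

Lemma mulPP z : P *m (P *m z) = P *m z.
Proof. by rewrite mulmxA P_idem. Qed.

Let rayleigh : set R := [set r | exists x y, [/\ P *m x = x, P *m y = y,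
  0 < bform J x y & r = (bform M x x + bform M y y) / (2 * bform J x y)]].
Let lam := inf rayleigh.

Lemma rayleigh_neq0 : (rayleigh !=set0)%classic.
Proof.
have [z Pz] := mulmx_neq0 P_neq0.
set x := P *m z; set y := P *m (J^T *m x).
have Px : P *m x = x by rewrite mulPP.
have Jxy : bform J x y = sqnorm x by rewrite bformJ_mulPr // bform_mulmxr mulJ_trJ.
exists ((bform M x x + bform M y y) / (2 * bform J x y)), x, y.
by split; rewrite ?Jxy ?sqnorm_gt0 // mulPP.
Qed.

Lemma rayleigh_lbound0 : lbound rayleigh 0.
Proof.
move=> _ [x [y [_ _ Jxy_gt0 ->]]].
by rewrite divr_ge0 ?addr_ge0 ?spd_bform_ge0 // mulr_ge0 // ltW.
Qed.

Lemma rayleigh_has_inf : has_inf rayleigh.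
Proof. by split; [exact: rayleigh_neq0 | exists 0; exact: rayleigh_lbound0]. Qed.

Lemma rayleigh_inf_ge0 : 0 <= lam.
Proof. exact: lb_le_inf rayleigh_neq0 rayleigh_lbound0. Qed.

Lemma rayleigh_inf_le x y : P *m x = x -> P *m y = y ->
  2 * lam * bform J x y <= bform M x x + bform M y y.
Proof.
move=> Px Py; have [Jxy_gt0|Jxy_le0] := ltrP 0 (bform J x y); last first.
  have := spd_bform_ge0 x M_spd; have := spd_bform_ge0 y M_spd.
  have := rayleigh_inf_ge0; nra.
have : lam <= (bform M x x + bform M y y) / (2 * bform J x y).
  by apply: ge_inf; [exact: rayleigh_has_inf.2 | exists x, y].
by rewrite ler_pdivlMr ?mulr_gt0 // mulrCA mulrA.
Qed.

Let Q := P^T *m M *m P + (1%:M - P)^T *m (1%:M - P).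
Let B := block_mx Q (- lam *: (P^T *m J *m P)) (- lam *: (P^T *m J^T *m P)) Q.

Lemma pencil_form x y : bform B (col_mx x y) (col_mx x y) =
  bform M (P *m x) (P *m x) + bform M (P *m y) (P *m y)
    - 2 * lam * bform J (P *m x) (P *m y) + sqnorm (x - P *m x) + sqnorm (y - P *m y).
Proof.
have Q_form z : bform Q z z = bform M (P *m z) (P *m z) + sqnorm (z - P *m z).
  rewrite bformDm bform_conj -[X in bform (_ *m X)]mul1mx mulmxA bform_conj.
  by rewrite mulmxBl mul1mx.
rewrite bform_block !Q_form !bformZm !bform_conj (bform_tr J^T) trmxK; ring.
Qed.

Lemma pencil_psd w : 0 <= bform B w w.
Proof.
rewrite -(vsubmxK w) pencil_form.
have := rayleigh_inf_le (mulPP (usubmx w)) (mulPP (dsubmx w)).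
have := sqnorm_ge0 (usubmx w - P *m usubmx w).
have := sqnorm_ge0 (dsubmx w - P *m dsubmx w); lra.
Qed.

Lemma pencil_sym : B^T = B.
Proof.
have Q_sym : Q^T = Q by rewrite linearD /= !trmx_mul !trmxK M_spd.1 mulmxA.
by rewrite tr_block_mx Q_sym !linearZ /= !trmx_mul !trmxK !mulmxA.
Qed.

Lemma pencil_not_unit : B \notin unitmx.
Proof.
apply/negP => B_unit.
have [c c_gt0 B_coercive] := psd_unitmx_coercive pencil_sym pencil_psd B_unit.
have [_ [x [y [Px Py Jxy_gt0 ->]]]] := inf_adherent c_gt0 rayleigh_has_inf.
rewrite -/lam ltr_pdivrMr ?mulr_gt0 // => Mxy_lt.
have := B_coercive (col_mx x y).
rewrite pencil_form sqnorm_col_mx Px Py !subrr /sqnorm !bform0l !addr0 -!/(sqnorm _).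
have := bformJ_le_sqnorm x y; nra.
Qed.

Lemma pencil_form0_fixed x y :
  bform B (col_mx x y) (col_mx x y) = 0 -> P *m x = x /\ P *m y = y.
Proof.
rewrite pencil_form => form0.
have := rayleigh_inf_le (mulPP x) (mulPP y).
have := sqnorm_ge0 (x - P *m x); have := sqnorm_ge0 (y - P *m y).
have fixP z : sqnorm (z - P *m z) = 0 -> P *m z = z.
  by move/eqP; rewrite sqnorm_eq0 subr_eq0 eq_sym => /eqP.
by split; apply: fixP; lra.
Qed.

Lemma pencil_kernel_eigen x y : P *m x = x -> P *m y = y -> B *m col_mx x y = 0 ->
  M *m x = lam *: (J *m y) /\ M *m y = - lam *: (J *m x).
Proof.
move=> Px Py; have Q_fix z : P *m z = z -> Q *m z = M *m z.
  by move=> Pz; rewrite mulmxDl P_M -!mulmxA Pz mulmxBl mul1mx Pz subrr !mulmx0 addr0.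
rewrite mul_block_col => /eqP; rewrite col_mx_eq0 !Q_fix // -!scalemxAl.
rewrite trmx_J mulmxN mulNmx !P_J mulNmx -!mulmxA Px Py => /andP[/eqP Mx /eqP My].
split; apply/eqP; rewrite -subr_eq0; first by rewrite -scaleNr Mx.
by rewrite -scalerN addrC My.
Qed.

Lemma pencil_kernel : exists x y : 'cV[R]_(n + n), [/\ P *m x = x, P *m y = y, x != 0,
  M *m x = lam *: (J *m y) & M *m y = - lam *: (J *m x)].
Proof.
have [v v_neq0 vB] : exists2 v : 'rV_((n + n) + (n + n)), v != 0 & v *m B = 0.
  by apply/det0P; have := pencil_not_unit; rewrite unitmxE unitfE negbK.
have Bv : B *m v^T = 0 by rewrite -pencil_sym -trmx_mul vB trmx0.
have [Px Py] : P *m usubmx v^T = usubmx v^T /\ P *m dsubmx v^T = dsubmx v^T.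
  by apply: pencil_form0_fixed; rewrite vsubmxK /bform -mulmxA Bv mulmx0 mxE.
move: v_neq0 Bv; rewrite -trmx_eq0 -[v^T]vsubmxK.
move: (usubmx v^T) (dsubmx v^T) Px Py => x y Px Py xy_neq0 Bxy.
have [Mx My] := pencil_kernel_eigen Px Py Bxy.
exists x, y; split => //; apply: contraNneq xy_neq0 => x0.
have [->|y_neq0] := eqVneq y 0; first by rewrite x0 col_mx0.
have := M_spd.2 y y_neq0; rewrite -/(bform M y y) bform_mulmxl My x0.
by rewrite mulmx0 scaler0 bform0r ltxx.
Qed.

Lemma sympl_pair_exists : exists (x y : 'cV[R]_(n + n)) (mu : R),
  [/\ P *m x = x, P *m y = y, bform J x y = 1,
     M *m x = mu *: (J *m y) & M *m y = - mu *: (J *m x)].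
Proof.
have [x [y [Px Py x_neq0 Mx My]]] := pencil_kernel.
have Jxy_gt0 : 0 < bform J x y.
  have := M_spd.2 x x_neq0; rewrite -/(bform M x x) bform_mulmxl Mx bformZr.
  rewrite -bform_mulmxl; have := rayleigh_inf_ge0; nra.
pose s := (Num.sqrt (bform J x y))^-1.
exists (s *: x), (s *: y), lam; split; rewrite -?scalemxAr ?Px ?Py //.
- rewrite bformZl bformZr mulrA -expr2 exprVn sqr_sqrtr ?mulVf ?gt_eqF //.
  exact: ltW.
- by rewrite Mx !scalerA mulrC.
- by rewrite My !scalerA mulrC.
Qed.

End SymplecticPair.

(* The columns of [U] and [V] are [j] pairs [s_i, s_(n+i)] of a partial Williamson
   basis, with symplectic eigenvalues [d]. *)
Definition sympl_eigenpairs (R : realType) n j (M : 'M[R]_(n + n))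
    (U V : 'M[R]_(n + n, j)) (d : 'rV[R]_j) : Prop :=
  [/\ U^T *m Jmx R n *m U = 0, V^T *m Jmx R n *m V = 0, U^T *m Jmx R n *m V = 1%:M,
     M *m U = Jmx R n *m V *m diag_mx d & M *m V = - Jmx R n *m U *m diag_mx d].

(* The projection onto the symplectic complement of the columns of [U] and [V],
   along their span. *)
Definition sympl_proj (R : realType) n j (U V : 'M[R]_(n + n, j)) : 'M[R]_(n + n) :=
  1%:M + U *m V^T *m Jmx R n - V *m U^T *m Jmx R n.

Section SymplecticProjection.
Variables (R : realType) (n j : nat) (M : 'M[R]_(n + n)).
Variables (U V : 'M[R]_(n + n, j)) (d : 'rV[R]_j).
Local Notation J := (Jmx R n).
Local Notation P := (sympl_proj U V).
Hypotheses (M_sym : M^T = M) (UV_eig : sympl_eigenpairs M U V d).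

Lemma trV_J_U : V^T *m J *m U = - 1%:M.
Proof. by have [_ _ UJV _ _] := UV_eig; rewrite -[LHS]opprK -trmx_sympl_form UJV trmx1. Qed.

Lemma trU_J_proj : U^T *m J *m P = 0.
Proof.
have [UJU _ UJV _ _] := UV_eig.
by rewrite !mulmxDr mulmxN mulmx1 !mulmxA UJU UJV !mul0mx mul1mx addr0 subrr.
Qed.

Lemma trV_J_proj : V^T *m J *m P = 0.
Proof.
have [_ VJV _ _ _] := UV_eig.
by rewrite !mulmxDr mulmxN mulmx1 !mulmxA trV_J_U VJV !mul0mx !mulNmx mul1mx subr0 subrr.
Qed.

Lemma sympl_proj_idem : P *m P = P.
Proof.
rewrite [X in X *m P]/sympl_proj !mulmxDl mulNmx mul1mx -!mulmxA.
by rewrite !(mulmxA _ J) trU_J_proj trV_J_proj !mulmx0 oppr0 !addr0.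
Qed.

Lemma trmx_sympl_proj_mul A : U^T *m A *m P = 0 -> V^T *m A *m P = 0 ->
  P^T *m A *m P = A *m P.
Proof.
rewrite -mulmxA -!(mulmxA _ A); move: (A *m P) => AP UAP VAP.
rewrite /sympl_proj !linearD linearN /= !trmx_mul !trmxK trmx1.
by rewrite !mulmxDl mulNmx mul1mx -!mulmxA UAP VAP !mulmx0 oppr0 !addr0.
Qed.

Lemma sympl_proj_J : P^T *m J *m P = J *m P.
Proof. exact: trmx_sympl_proj_mul trU_J_proj trV_J_proj. Qed.

Lemma sympl_proj_M : P^T *m M *m P = M *m P.
Proof.
have [_ _ _ MU MV] := UV_eig.
have trUM : U^T *m M = - diag_mx d *m V^T *m J.
  by rewrite -M_sym -trmx_mul MU !trmx_mul tr_diag_mx trmx_J !mulmxN !mulNmx mulmxA.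
have trVM : V^T *m M = diag_mx d *m U^T *m J.
  by rewrite -M_sym -trmx_mul MV !trmx_mul tr_diag_mx linearN /= trmx_J opprK mulmxA.
apply: trmx_sympl_proj_mul; rewrite ?trUM ?trVM -!mulmxA (mulmxA _ J).
  by rewrite trV_J_proj !mulmx0.
by rewrite trU_J_proj !mulmx0.
Qed.

Lemma mxtrace_sympl_proj : \tr P = (n + n)%:R - (j + j)%:R.
Proof.
have [_ _ UJV _ _] := UV_eig.
rewrite !mxtraceD linearN /= mxtrace1 -!mulmxA (mxtrace_mulC U) (mxtrace_mulC V).
by rewrite UJV trV_J_U linearN /= mxtrace1 natrD; lra.
Qed.

Lemma sympl_proj_neq0 : (j < n)%N -> P != 0.
Proof.
move=> jn; apply: contraTneq isT => P0; move: mxtrace_sympl_proj.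
by rewrite P0 mxtrace0 => /eqP; rewrite eq_sym subr_eq0 eqr_nat; lia.
Qed.

Lemma sympl_eigenpairs_cons x y mu :
  P *m x = x -> P *m y = y -> bform J x y = 1 ->
  M *m x = mu *: (J *m y) -> M *m y = - mu *: (J *m x) ->
  sympl_eigenpairs M (row_mx x U) (row_mx y V) (row_mx (const_mx mu) d).
Proof.
move=> Px Py Jxy Mx My; have [UJU VJV UJV MU MV] := UV_eig.
have fixed_orth (A : 'M[R]_(n + n, j)) (z : 'cV[R]_(n + n)) :
    A^T *m J *m P = 0 -> P *m z = z -> A^T *m J *m z = 0.
  by move=> AJP <-; rewrite mulmxA AJP mul0mx.
have UJx := fixed_orth _ _ trU_J_proj Px; have UJy := fixed_orth _ _ trU_J_proj Py.
have VJx := fixed_orth _ _ trV_J_proj Px; have VJy := fixed_orth _ _ trV_J_proj Py.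
have xJU := sympl_form_eq0C UJx; have xJV := sympl_form_eq0C VJx.
have yJV := sympl_form_eq0C VJy.
rewrite /sympl_eigenpairs !form_row_mx !sympl_form_xx UJU VJV UJV UJx VJy UJy xJU xJV yJV.
rewrite [_ *m y]mx11_scalar -/(bform J x y) Jxy block_mx0 -scalar_mx_block.
rewrite !mul_mx_row diag_mx_row diag_const_mx !mul_row_block !mulmx0 !addr0 !add0r.
by rewrite !mul_mx_scalar Mx My MU MV !mulNmx scalerN scaleNr.
Qed.

End SymplecticProjection.

Lemma sympl_eigenpairs_exist (R : realType) n (M : 'M[R]_(n + n)) j : spd M -> (j <= n)%N ->
  exists U V (d : 'rV[R]_j), sympl_eigenpairs M U V d.
Proof.
move=> M_spd; elim: j => [_|j IHj jn].
  by exists 0, 0, 0; split; apply/matrixP => ? [].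
have [U [V [d UV_eig]]] := IHj (ltnW jn).
have [x [y [mu [Px Py Jxy Mx My]]]] := sympl_pair_exists M_spd
  (sympl_proj_idem UV_eig) (sympl_proj_M M_spd.1 UV_eig) (sympl_proj_J UV_eig)
  (sympl_proj_neq0 UV_eig jn).
exists (row_mx x U), (row_mx y V), (row_mx (const_mx mu : 'rV_1) d).
exact: sympl_eigenpairs_cons.
Qed.

Lemma sympl_col_neq0 (R : realType) n k (X : 'M[R]_(n + n, k + k)) i :
  X^T *m Jmx R n *m X = Jmx R k -> col (lshift k i) X != 0.
Proof.
move/(congr1 (fun A : 'M[R]_(k + k) => A (lshift k i) (rshift k i))).
rewrite mulmx_bform [RHS]block_mxEur mxE eqxx; apply: contra_eqN => /eqP->.
by rewrite bform0l eq_sym oner_eq0.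
Qed.

Lemma sympl_gram_diag_gt0 (R : realType) n k (M : 'M[R]_(n + n))
    (X : 'M[R]_(n + n, k + k)) (d : 'rV[R]_k) :
  spd M -> X^T *m Jmx R n *m X = Jmx R k ->
  X^T *m M *m X = block_mx (diag_mx d) 0 0 (diag_mx d) -> forall i, 0 < d 0 i.
Proof.
move=> M_spd XJX XMX i.
move/(congr1 (fun A : 'M[R]_(k + k) => A (lshift k i) (lshift k i))): XMX.
rewrite mulmx_bform [RHS]block_mxEul mxE eqxx mulr1n => <-.
exact: M_spd.2 _ (sympl_col_neq0 i XJX).
Qed.

Lemma williamson_exists (R : realType) n (M : 'M[R]_(n + n)) :
  spd M -> exists S d, williamson M S d.
Proof.
move=> M_spd; have [U [V [d UV_eig]]] := sympl_eigenpairs_exist M_spd (leqnn n).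
have [UJU VJV UJV MU MV] := UV_eig.
have S_sympl : symplectic (row_mx U V).
  by rewrite /symplectic form_row_mx UJU VJV UJV (trV_J_U UV_eig).
have S_gram : (row_mx U V)^T *m M *m row_mx U V = block_mx (diag_mx d) 0 0 (diag_mx d).
  rewrite form_row_mx -!mulmxA MU MV !mulNmx !mulmxN !mulmxA UJU VJV UJV (trV_J_U UV_eig).
  by rewrite !mul0mx mul1mx mulNmx mul1mx opprK oppr0.
exists (row_mx U V), d; split=> //; split=> //.
exact: sympl_gram_diag_gt0 M_spd S_sympl S_gram.
Qed.

Lemma diag_intertwine_eq0 (R : numDomainType) m p (a : 'rV[R]_m) (b : 'rV[R]_p)
    (Y Z : 'M[R]_(m, p)) r l :
  0 < a 0 r -> 0 < b 0 l -> a 0 r != b 0 l ->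
  diag_mx a *m Y = Z *m diag_mx b -> diag_mx a *m Z = Y *m diag_mx b -> Y r l = 0.
Proof.
move=> a_gt0 b_gt0 ab /matrixP/(_ r l) aYZ /matrixP/(_ r l) aZY.
move: aYZ aZY; rewrite !mul_diag_mx !mul_mx_diag !mxE.
set x := a 0 r; set y := b 0 l; set u := Y r l; set v := Z r l => xuv xvu.
have : (x - y) * (x + y) * u = x * (x * u - v * y) + y * (x * v - u * y) by ring.
rewrite xuv xvu !subrr !mulr0 addr0 => /eqP.
by rewrite !mulf_eq0 subr_eq0 (negbTE ab) gt_eqF ?addr_gt0 //= => /eqP.
Qed.

Lemma diag_intertwine (R : numDomainType) k (nu : 'rV[R]_k) (Y Z : 'M[R]_k) :
  (forall i, 0 < nu 0 i) -> (forall i j, i != j -> nu 0 i != nu 0 j) ->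
  diag_mx nu *m Y = Z *m diag_mx nu -> diag_mx nu *m Z = Y *m diag_mx nu ->
  Z = Y /\ Y = diag_mx (\row_i Y i i).
Proof.
move=> nu_gt0 nu_inj YZ ZY.
have off (A B : 'M[R]_k) i j : i != j -> diag_mx nu *m A = B *m diag_mx nu ->
    diag_mx nu *m B = A *m diag_mx nu -> A i j = 0.
  by move=> ij; apply: diag_intertwine_eq0; rewrite ?nu_gt0 ?nu_inj.
split; apply/matrixP => i j; rewrite ?mxE; have [<-|ij] := eqVneq i j.
- move/matrixP/(_ i i): YZ; rewrite mul_diag_mx mul_mx_diag !mxE mulrC.
  by move/(mulIf (lt0r_neq0 (nu_gt0 i))) ->.
- by rewrite (off _ _ i j ij ZY YZ) (off _ _ i j ij YZ ZY).
- by rewrite mulr1n.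
- by rewrite (off _ _ i j ij YZ ZY) mulr0n.
Qed.

Lemma sym_commute_sympl_diag (R : realType) k (nu : 'rV[R]_k) (P : 'M[R]_(k + k)) :
  (forall i, 0 < nu 0 i) -> (forall i j, i != j -> nu 0 i != nu 0 j) -> P^T = P ->
  block_mx (diag_mx nu) 0 0 (diag_mx nu) *m P *m Jmx R k =
    Jmx R k *m P *m block_mx (diag_mx nu) 0 0 (diag_mx nu) ->
  exists D, P = block_mx (diag_mx D) 0 0 (diag_mx D).
Proof.
move=> nu_gt0 nu_inj; rewrite -[P]submxK.
move: (ulsubmx P) (ursubmx P) (dlsubmx P) (drsubmx P) => A B C D.
rewrite tr_block_mx => /eq_block_mx [_ CB _ _].
rewrite /Jmx !mulmx_block !(mulmx0, mul0mx, addr0, add0r, mulmx1, mul1mx, mulmxN, mulNmx).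
case/eq_block_mx => nuB nuA /oppr_inj nuD nuC.
have [DA A_diag] := diag_intertwine nu_gt0 nu_inj nuA nuD.
rewrite -mulNmx in nuC; rewrite -mulmxN in nuB.
have [BC C_diag] := diag_intertwine nu_gt0 nu_inj nuC nuB.
have C0 : C = 0.
  rewrite C_diag; apply/matrixP => i j; rewrite !mxE.
  suff -> : C i i = 0 by rewrite mul0rn.
  have : C i i = B i i by rewrite -CB mxE.
  by rewrite -BC mxE => /eqP; rewrite eqNr => /eqP ->; rewrite oppr0.
exists (\row_i A i i); rewrite DA -A_diag C0.
by rewrite -[B]opprK BC C0 oppr0.
Qed.

Lemma critical_point_gram (R : realType) n k (M : 'M[R]_(n + n)) (nu : 'rV[R]_k)
    (X : 'M[R]_(n + n, k + k)) :
  M^T = M -> (forall i, 0 < nu 0 i) -> (forall i j, i != j -> nu 0 i != nu 0 j) ->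
  critical_point M nu X ->
  exists D : 'rV[R]_k, X^T *m M *m X = block_mx (diag_mx D) 0 0 (diag_mx D) /\
    M *m X = Jmx R n *m X *m block_mx 0 (- diag_mx D) (diag_mx D) 0.
Proof.
move=> M_sym nu_gt0 nu_inj [XJX [L [L_skew MXN]]].
set N := block_mx (diag_mx nu) 0 0 (diag_mx nu) in MXN *.
have N_unit : N \in unitmx.
  have det_neq0 : \prod_i nu 0 i != 0 by apply/prodf_neq0 => i _; rewrite lt0r_neq0.
  by rewrite unitmxE unitfE det_ublock det_diag mulf_neq0.
have N_sym : N^T = N by rewrite tr_block_mx !trmx0 tr_diag_mx.
have [G GE] : exists G, X^T *m M *m X = G by eexists.
have G_sym : G^T = G by rewrite -GE !trmx_mul trmxK M_sym mulmxA.
have GN : G *m N = Jmx R k *m L.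
  by rewrite -GE; move: (congr1 (mulmx X^T) MXN); rewrite !mulmxA XJX.
have L_def : L = (Jmx R k)^T *m G *m N by rewrite -mulmxA GN mulmxA trJ_mulJ mul1mx.
have [D GD] : exists D, G = block_mx (diag_mx D) 0 0 (diag_mx D).
  apply: (sym_commute_sympl_diag nu_gt0 nu_inj G_sym).
  move: L_skew; rewrite L_def !trmx_mul trmxK N_sym G_sym trmx_J !mulNmx opprK.
  by rewrite mulmxA.
exists D; split; first by rewrite GE.
have JG : (Jmx R k)^T *m G = block_mx 0 (- diag_mx D) (diag_mx D) 0.
  rewrite GD trmx_J /Jmx opp_block_mx !oppr0 mulmx_block.
  by rewrite !(mulmx0, mul0mx, addr0, add0r, mul1mx, mulNmx) opprK.
have := congr1 (mulmx^~ (invmx N)) MXN; rewrite /= L_def !mulmxA !mulmxK // => ->.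
by rewrite -mulmxA JG.
Qed.

Lemma williamson_eigval (R : realType) n k (M : 'M[R]_(n + n)) S d
    (X : 'M[R]_(n + n, k + k)) (delta : 'rV[R]_k) i :
  williamson M S d ->
  M *m X = Jmx R n *m X *m block_mx 0 (- diag_mx delta) (diag_mx delta) 0 ->
  col (lshift k i) X != 0 -> 0 < delta 0 i -> exists r, d 0 r = delta 0 i.
Proof.
move=> [S_sympl [d_gt0 SMS]] MX Xi_neq0 delta_gt0.
have [r /eqP|d_neq] := pickP (fun r => d 0 r == delta 0 i); first by exists r.
rewrite /symplectic in S_sympl; set J := Jmx R n in S_sympl MX.
set Y := - (J *m S^T *m J) *m X.
have SY : S *m Y = X.
  have S_inv : - (J *m S^T *m J) *m S = 1%:M.
    by rewrite mulNmx -!mulmxA (mulmxA S^T) S_sympl mulJJ opprK.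
  by rewrite mulmxA (mulmx1C S_inv) mul1mx.
clearbody Y.
have DY : block_mx (diag_mx d) 0 0 (diag_mx d) *m Y =
    J *m Y *m block_mx 0 (- diag_mx delta) (diag_mx delta) 0.
  by rewrite -SMS -!mulmxA SY MX -SY !mulmxA S_sympl.
move: DY; rewrite -[Y]submxK /J /Jmx !mulmx_block.
rewrite !(mulmx0, mul0mx, addr0, add0r, mul1mx, mulmx1, mulNmx, mulmxN, opprK).
case/eq_block_mx => e11 e12 e21 e22.
have d_neq_i r : d 0 r != delta 0 i by rewrite d_neq.
have Y11 r : ulsubmx Y r i = 0.
  exact: diag_intertwine_eq0 (d_gt0 r) delta_gt0 (d_neq_i r) e11 e22.
have Y21 r : dlsubmx Y r i = 0.
  have e12' : diag_mx d *m - ursubmx Y = dlsubmx Y *m diag_mx delta.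
    by rewrite mulmxN e12 opprK.
  rewrite -mulNmx in e21.
  exact: diag_intertwine_eq0 (d_gt0 r) delta_gt0 (d_neq_i r) e21 e12'.
have Yi0 : col (lshift k i) Y = 0.
  rewrite -[Y]vsubmxK col_col_mx -!col_lsubmx.
  by apply/colP => r; rewrite !mxE; case: split => r'; rewrite mxE; [exact: Y11 | exact: Y21].
by case/negP: Xi_neq0; rewrite -SY colE -mulmxA -colE Yi0 mulmx0.
Qed.

Lemma trmx_offdiag_mul_diag (R : comNzRingType) k (delta nu : 'rV[R]_k) :
  let L := block_mx 0 (- diag_mx delta) (diag_mx delta) 0 *m
           block_mx (diag_mx nu) 0 0 (diag_mx nu) in
  L^T = - L.
Proof.
rewrite /= mulmx_block !(mulmx0, mul0mx, addr0, add0r, mulNmx) tr_block_mx !trmx0 linearN /=.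
by rewrite trmx_mul !tr_diag_mx diag_mx_comm opp_block_mx !oppr0 opprK.
Qed.

Theorem theorem3p4 (R : realType) (n k : nat) (M : 'M[R]_(n + n))
    (nu : 'rV[R]_k) (X : 'M[R]_(n + n, k + k)) :
  spd M -> (1 <= k)%N -> (k <= n)%N ->
  (forall i : 'I_k, 0 < nu 0 i) ->
  (forall i j : 'I_k, (i < j)%N -> nu 0 i < nu 0 j) ->
  critical_point M nu X <-> sympl_eigvec_set M X.
Proof.
move=> M_spd _ _ nu_gt0 nu_lt.
have nu_inj i j : i != j -> nu 0 i != nu 0 j.
  by case: (ltngtP i j) => [ij|ji|/val_inj ->]; rewrite ?eqxx // => _;
     [rewrite lt_eqF ?nu_lt | rewrite gt_eqF ?nu_lt].
split=> [crit|[XJX [delta [_ MX]]]].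
  have [XJX _] := crit.
  have [D [XMX MX]] := critical_point_gram M_spd.1 nu_gt0 nu_inj crit.
  have D_gt0 := sympl_gram_diag_gt0 M_spd XJX XMX.
  have [S [d SW]] := williamson_exists M_spd.
  have [idx idxE] := fin_all_exists (fun i =>
    williamson_eigval SW MX (sympl_col_neq0 i XJX) (D_gt0 i)).
  split=> //; exists D; split=> //.
  by exists S, d; split=> //; exists idx => i; rewrite idxE.
split=> //; exists (block_mx 0 (- diag_mx delta) (diag_mx delta) 0 *m
                    block_mx (diag_mx nu) 0 0 (diag_mx nu)).
by rewrite trmx_offdiag_mul_diag MX !mulmxA.
Qed.
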